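(* Let $A$ be a set of regular cardinals without a maximum, and let $\kappa\in\operatorname{spec}(A)$ with $\kappa\geq\sup(A)$. Let $\mathcal{F}\subseteq\prod A$ be any set of size $\kappa$ such that every $\kappa$-sized subset of $\mathcal{F}$ is unbounded in $(\prod A,<)$. Then for every $\mathcal{F}_0\subseteq\mathcal{F}$ of size $\kappa$, the set $\operatorname{ub}(\mathcal{F}_0)$ is infinite.
   Context: $\prod A$ is the set of functions $f$ on $A$ with $f(a)\in a$, ordered pointwise ($f<g$ iff $f(a)<g(a)$ for all $a\in A$). $\operatorname{spec}(A)$ is the set of regular $\lambda$ for which some $\mathcal{F}\subseteq\prod A$ of size $\lambda$ has every $\lambda$-sized subset unbounded in $(\prod A,<)$. For $\mathcal{G}\subseteq\prod A$, $\operatorname{ub}(\mathcal{G})$ is the set of $a\in A$ such that $\{f(a):f\in\mathcal{G}\}$ is unbounded in $a$. *)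

From HB Require Import structures.
From mathcomp Require Import all_boot all_order.
From mathcomp Require Import boolp classical_sets functions cardinality.
Set Implicit Arguments. Unset Strict Implicit. Unset Printing Implicit Defensive.
Local Open Scope classical_set_scope.
Local Open Scope card_scope.

(* Ordinals are modelled as elements of a type [O] carrying a strict
   well-order [lt]; an ordinal [a] is identified with the set of its
   predecessors [seg lt a]. *)
Record well_order (O : Type) (lt : O -> O -> Prop) : Prop := WellOrder {
  wo_irrefl : forall x, ~ lt x x;
  wo_trans : forall x y z, lt x y -> lt y z -> lt x z;
  wo_total : forall x y, lt x y \/ x = y \/ lt y x;
  wo_wf : well_founded lt }.

Section Defs.
Variables (O : Type) (lt : O -> O -> Prop).

Definition le (x y : O) := lt x y \/ x = y.

Definition seg (a : O) : set O := [set x | lt x a].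

Definition is_cardinal (a : O) := forall b, lt b a -> ~ (seg b #= seg a).

Definition regular (a : O) :=
  [/\ is_cardinal a, infinite_set (seg a) &
      forall X : set O, X `<=` seg a ->
        (forall y, lt y a -> exists2 x, X x & le y x) -> X #= seg a].

(* prod A: functions f with f a \in a for a \in A; f is normalised to be
   the identity outside A so that elements of prod A are determined by
   their values on A. *)
Definition prodA (A : set O) : set (O -> O) :=
  [set f | forall a, (A a -> lt (f a) a) /\ (~ A a -> f a = a)].

Definition ltA (A : set O) (f g : O -> O) := forall a, A a -> lt (f a) (g a).

Definition unbounded_prod (A : set O) (G : set (O -> O)) :=
  ~ (exists2 h, prodA A h & forall g, G g -> ltA A g h).

Definition spec (A : set O) : set O :=
  [set lam | regular lam /\
     exists2 F : set (O -> O), F `<=` prodA A /\ F #= seg lam &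
       forall G, G `<=` F -> G #= seg lam -> unbounded_prod A G].

Definition ub (A : set O) (G : set (O -> O)) : set O :=
  [set a | A a /\ forall b, lt b a -> exists2 f, G f & lt b (f a)].

End Defs.

From HB Require Import structures.
From mathcomp Require Import all_boot all_order.
From mathcomp Require Import boolp classical_sets functions cardinality.
Local Open Scope classical_set_scope.
Local Open Scope card_scope.

(* If ub(F0) were finite, its points could be removed one at a time: for a in
   ub(G) with |G| = kappa, regularity of kappa and |a| < kappa give a
   kappa-sized subfamily G' of G on which f(a) is constant, and then ub(G')
   is contained in ub(G) minus a.  This ends with a kappa-sized G contained
   in F with ub(G) empty.  Then each {f(a) : f in G} lies below some b < a;
   since the regular cardinal a is a limit, some c with b < c < a exists, and
   these c form a bound for G in prod A, contradicting unboundedness. *)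

Lemma card_le_inj_in {T U} {A : set T} {B : set U} : A #<= B -> A !=set0 ->
  exists2 f : T -> U, set_fun A B f & set_inj A f.
Proof.
elim/Ppointed: U B => U B; last by move=> /pcard_leP/injfunPex.
by rewrite card_le_emptyr => /eqP -> [x].
Qed.

Section WellOrder.
Context {O : Type} {lt : O -> O -> Prop} (wo : well_order lt).

Lemma lt_irrefl x : ~ lt x x.
Proof. exact: (@wo_irrefl _ _ wo x). Qed.

Lemma lt_trans {x y z} : lt x y -> lt y z -> lt x z.
Proof. exact: (@wo_trans _ _ wo x y z). Qed.

Lemma wo_leNgt {x y} : ~ lt x y -> le lt y x.
Proof.
move=> Nxy; have [//|[->|]] := wo_total wo x y; by [right|left].
Qed.

Lemma nomax_bound_lt {A : set O} {k} :
  ~ (exists2 m, A m & forall a, A a -> le lt a m) ->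
  (forall a, A a -> le lt a k) -> forall a, A a -> lt a k.
Proof.
move=> nomax Ak a Aa; case: (Ak a Aa) => // ak.
by case: nomax; exists a => //; rewrite ak.
Qed.

Lemma cardinal_seg_not_card_le {k g} :
  is_cardinal lt k -> lt g k -> ~ (seg lt k #<= seg lt g).
Proof.
move=> ck gk kg; apply: (ck g gk); apply: (Cantor_Bernstein _ kg).
by apply: subset_card_le => x xg; exact: lt_trans xg gk.
Qed.

Lemma regular_small_bounded {k} (X : set O) : regular lt k ->
  X `<=` seg lt k -> ~ (X #= seg lt k) -> exists2 g, lt g k & forall x, X x -> lt x g.
Proof.
move=> [_ _ cofinal] Xk NXk.
have /existsNP[g /not_implyP[gk Ng]] :
    ~ (forall g, lt g k -> exists2 x, X x & le lt g x) by move/(cofinal _ Xk).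
exists g => // x Xx; apply: contrapT => /wo_leNgt gx.
by apply: Ng; exists x.
Qed.

Lemma regular_limit {k b} : regular lt k -> lt b k -> exists2 c, lt b c & lt c k.
Proof.
move=> [_ kinf cofinal] bk; apply: contrapT => Nc; apply: kinf.
rewrite -(eq_finite_set (cofinal [set b] _ _)) ?finite_set1 //; first by move=> _ ->.
move=> y yk; exists b => //.
by have [|[|by_]] := wo_total wo y b; [left|right|case: Nc; exists y].
Qed.

Lemma regular_image_bounded {k a} (f : O -> O) : regular lt k -> lt a k ->
  (forall x, lt x a -> lt (f x) k) ->
  exists2 g, lt g k & forall x, lt x a -> lt (f x) g.
Proof.
move=> rk ak fk; have [ck _ _] := rk.
have [|image_card|g gk bound] := regular_small_bounded (f @` seg lt a) rk.
- by move=> _ [x xa <-]; apply: fk.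
- apply: (cardinal_seg_not_card_le ck ak).
  by apply: card_le_trans (card_image_le f _); have /card_eqPle[] := image_card.
- by exists g => // x xa; apply: bound; exists x.
Qed.

(* If every fibre were small, an injection e of X into k would send the fibre
   over x below some beta x < k, and all the beta x (x < a) lie below one
   g < k, so X, hence k, would inject into g. *)
Lemma regular_pigeonhole {T} {X : set T} (c : T -> O) {k a} :
  regular lt k -> lt a k -> X #= seg lt k -> (forall t, X t -> lt (c t) a) ->
  exists2 x, lt x a & [set t | X t /\ c t = x] #= seg lt k.
Proof.
move=> rk ak Xk ca; have [ck kinf _] := rk.
have Xinf : infinite_set X by rewrite (eq_finite_set Xk).
suff [x fibre_card] : exists x, [set t | X t /\ c t = x] #= seg lt k.
  have /infinite_setN0[t [Xt ctx]] : infinite_set [set t | X t /\ c t = x].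
    by rewrite (eq_finite_set fibre_card).
  by exists x => //; rewrite -ctx; apply: ca.
apply: contrapT => /forallNP small.
have [Xle kle] := proj1 (card_eqPle _ _) Xk.
have [e eS eI] := card_le_inj_in Xle (infinite_setN0 Xinf).
have fibre_bounded x : exists g, lt g k /\
    forall t, X t -> c t = x -> lt (e t) g.
  have fibreI : set_inj [set t | X t /\ c t = x] e.
    by move=> s t /set_mem[Xs _] /set_mem[Xt _]; apply: eI; apply/mem_set.
  have [|image_card|g gk bound] :=
    regular_small_bounded (e @` [set t | X t /\ c t = x]) rk.
  - by move=> _ [t [Xt _] <-]; apply: eS.
  - by apply: (small x); rewrite -(card_eql (inj_card_eq fibreI)).
  - by exists g; split => // t Xt ctx; apply: bound; exists t.
have /choice[beta beta_bound] := fibre_bounded.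
have [g gk gbound] :=
  regular_image_bounded beta rk ak (fun x _ => (beta_bound x).1).
apply: (cardinal_seg_not_card_le ck gk); apply: card_le_trans kle _.
rewrite -(card_le_eql (inj_card_eq eI)); apply: subset_card_le => _ [t Xt <-].
exact: lt_trans ((beta_bound _).2 t Xt erefl) (gbound _ (ca t Xt)).
Qed.

Lemma subset_ub {A : set O} {G G' : set (O -> O)} :
  G' `<=` G -> ub lt A G' `<=` ub lt A G.
Proof. by move=> G'G a [Aa unb]; split => // b ba; have [f /G'G] := unb b ba; exists f. Qed.

Lemma not_ub_fibre {A : set O} {G : set (O -> O)} {a x} :
  lt x a -> ~ ub lt A [set g | G g /\ g a = x] a.
Proof. by move=> xa [_ /(_ x xa)[f [_ ->]]]; exact: lt_irrefl. Qed.

Section Product.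
Context {A : set O} (A_reg : forall a, A a -> regular lt a).

Lemma not_ub_bounded {G : set (O -> O)} {a} : A a -> ~ ub lt A G a ->
  exists2 c, lt c a & forall g, G g -> lt (g a) c.
Proof.
move=> Aa /not_andP[//|/existsNP[b /not_implyP[ba Nb]]].
have [c bc ca] := regular_limit (A_reg _ Aa) ba.
exists c => // g Gg; have [gb|->//] : le lt (g a) b.
  by apply: wo_leNgt => bg; apply: Nb; exists g.
exact: lt_trans gb bc.
Qed.

Lemma ub0_bounded {G : set (O -> O)} : ub lt A G `<=` set0 ->
  exists2 h, prodA lt A h & forall g, G g -> ltA lt A g h.
Proof.
move=> ub0.
have bound a : exists c, (A a -> lt c a /\ forall g, G g -> lt (g a) c) /\
                         (~ A a -> c = a).
  have [Aa|NAa] := pselect (A a); last by exists a.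
  have [c ca cbound] := not_ub_bounded Aa (@ub0 a).
  by exists c.
have /choice[h hbound] := bound.
exists h => [a|g Gg a Aa]; last exact: ((hbound a).1 Aa).2.
by have [hA hNA] := hbound a; split => // /hA[].
Qed.

Context {k : O} (k_reg : regular lt k) (A_lt : forall a, A a -> lt a k).

Lemma finite_ub_subfamily_ub0 {S : set O} {G : set (O -> O)} : finite_set S ->
  G `<=` prodA lt A -> G #= seg lt k -> ub lt A G `<=` S ->
  exists2 G', G' `<=` G & G' #= seg lt k /\ ub lt A G' `<=` set0.
Proof.
move=> [n]; elim: n S G => [|n IH] S G Sn GA Gk GS.
  move: Sn; rewrite II0 card_eq0 => /eqP S0.
  by exists G => //; split => //; rewrite -S0.
have /eq_cardSP[x Sx Sxn] := Sn.
have [ubx|Nubx] := pselect (ub lt A G x); last first.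
  apply: IH Sxn GA Gk _ => y Gy; split; first exact: GS.
  by move=> /= yx; apply: Nubx; rewrite -yx.
have Ax := ubx.1.
have [c cx fibre_k] := regular_pigeonhole (fun g => g x) k_reg (A_lt _ Ax) Gk
  (fun g Gg => (GA g Gg x).1 Ax).
have [|y ub_y|G' G'fibre G'prop] := IH (S `\ x) _ Sxn _ fibre_k.
- by move=> g [Gg _]; apply: GA.
- split; first by apply: GS; move: ub_y; apply: subset_ub => g [].
  by move=> /= yx; move: ub_y; rewrite yx; exact: not_ub_fibre cx.
- by exists G' => // g /G'fibre[].
Qed.

End Product.
End WellOrder.

Theorem lemma5p1 (O : Type) (lt : O -> O -> Prop) (wo : well_order lt)
  (A : set O) (A_reg : forall a, A a -> regular lt a)
  (A_nomax : ~ (exists2 m, A m & forall a, A a -> le lt a m))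
  (kappa : O) (k_spec : spec lt A kappa)
  (k_ge_sup : forall a, A a -> le lt a kappa)
  (F : set (O -> O)) (F_prod : F `<=` prodA lt A) (F_size : F #= seg lt kappa)
  (F_unb : forall G, G `<=` F -> G #= seg lt kappa -> unbounded_prod lt A G) :
  forall F0 : set (O -> O), F0 `<=` F -> F0 #= seg lt kappa ->
    infinite_set (ub lt A F0).
Proof.
move=> F0 F0F F0k F0fin.
have k_reg : regular lt kappa by case: k_spec.
have A_lt := nomax_bound_lt A_nomax k_ge_sup.
have F0A : F0 `<=` prodA lt A := subset_trans F0F F_prod.
have [G GF0 [Gk ub0]] :=
  finite_ub_subfamily_ub0 wo k_reg A_lt F0fin F0A F0k (@subset_refl _ _).
apply: (F_unb G _ Gk); first exact: subset_trans GF0 F0F.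
exact: (ub0_bounded wo A_reg ub0).
Qed.
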